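(* Let $g,h\in\mathrm{PSL}(2,\mathbb{C})$ be non-commuting loxodromic elements. If $z_0$ is the midpoint of the shortest geodesic segment connecting the axes of $g$ and $h^{-1}gh$, then $d_g z_0<d_{hgh^{-1}}z_0$.
   Context: For an isometry $\gamma$ of hyperbolic 3-space $\mathbb{H}^3$ (with hyperbolic metric $\rho$) and $z\in\mathbb{H}^3$, $d_\gamma z=\rho(z,\gamma z)$. The axis of a loxodromic element is its translation axis in $\mathbb{H}^3$. *)

From Stdlib Require Import Reals.
From Coquelicot Require Import Coquelicot.
Open Scope R_scope.

(** Upper half-space model of hyperbolic 3-space:
    a point z + t j is represented by the pair (z, t) with z : C, t > 0. *)
Definition H3pt := (C * R)%type.
Definition inH3 (x : H3pt) : Prop := 0 < snd x.

Definition cosh_rho (x y : H3pt) : R :=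
  1 + ((Cmod (Cminus (fst x) (fst y)))^2 + (snd x - snd y)^2)
      / (2 * snd x * snd y).

Definition acosh (u : R) : R := ln (u + sqrt (u * u - 1)).

Definition rho (x y : H3pt) : R := acosh (cosh_rho x y).

(** 2x2 complex matrices; elements of PSL(2,C) are represented by
    matrices of SL(2,C) (determinant 1), modulo sign. *)
Record M2 := mkM2 { ma : C; mb : C; mc : C; md : C }.

Definition det (A : M2) : C := Cminus (Cmult (ma A) (md A)) (Cmult (mb A) (mc A)).
Definition SL2 (A : M2) : Prop := det A = RtoC 1.

Definition mmul (A B : M2) : M2 :=
  mkM2 (Cplus (Cmult (ma A) (ma B)) (Cmult (mb A) (mc B)))
       (Cplus (Cmult (ma A) (mb B)) (Cmult (mb A) (md B)))
       (Cplus (Cmult (mc A) (ma B)) (Cmult (md A) (mc B)))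
       (Cplus (Cmult (mc A) (mb B)) (Cmult (md A) (md B))).

Definition mopp (A : M2) : M2 := mkM2 (Copp (ma A)) (Copp (mb A)) (Copp (mc A)) (Copp (md A)).

(** Inverse of a determinant-one matrix. *)
Definition minv (A : M2) : M2 := mkM2 (md A) (Copp (mb A)) (Copp (mc A)) (ma A).

(** Commutation in PSL(2,C): AB = BA up to sign. *)
Definition pcommute (A B : M2) : Prop := mmul A B = mmul B A \/ mmul A B = mopp (mmul B A).

Definition trace (A : M2) : C := Cplus (ma A) (md A).

(** Loxodromic: tr^2 not in the real interval [0,4]
    (well defined on PSL(2,C) since tr^2 is sign-invariant). *)
Definition loxodromic (A : M2) : Prop :=
  let s := Cmult (trace A) (trace A) in
  ~ (Im s = 0 /\ 0 <= Re s <= 4).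

(** Action of A on the upper half-space (Poincare extension):
    A(z + t j) = [ (az+b) conj(cz+d) + a conj(c) t^2 + t j ] / (|cz+d|^2 + |c|^2 t^2). *)
Definition act (A : M2) (x : H3pt) : H3pt :=
  let z := fst x in let t := snd x in
  let w := Cplus (Cmult (mc A) z) (md A) in
  let den := (Cmod w)^2 + (Cmod (mc A))^2 * t^2 in
  (Cmult (RtoC (/ den))
     (Cplus (Cmult (Cplus (Cmult (ma A) z) (mb A)) (Cconj w))
            (Cmult (Cmult (ma A) (Cconj (mc A))) (RtoC (t^2)))),
   t / den).

Definition disp (A : M2) (x : H3pt) : R := rho x (act A x).

(** Translation axis of A: the set of points of H^3 where the displacement
    is minimal (for loxodromic A this is its axis geodesic). *)
Definition axis (A : M2) (x : H3pt) : Prop :=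
  inH3 x /\ forall w, inH3 w -> disp A x <= disp A w.

(* Conjugating by a matrix of SL(2,C) that diagonalizes g, we may take g = diag(l, 1/l),
   whose axis is the vertical geodesic V.  Then cosh d_g (z, t) = K0 + K1 |z|^2 / t^2 with
   K1 > 0, and nu (z, t) = |z|^2 / t^2 is sinh^2 of the distance to V, so d_g increases with
   the distance to V.  Since d_(h g h^-1) z0 = d_g (h^-1 z0), it suffices to show
   nu (h^-1 z0) > nu z0.  Otherwise the foot y on V of h^-1 z0 satisfies
   rho(z0, h y) <= rho(z0, p) = rho(p, q) / 2 and rho(p, h y) >= rho(p, q), because h^-1 p lies
   on the axis h^-1 V of h^-1 g h; so h y is the reflection q of p in z0, and q lies on both
   h V and h^-1 V.  Along h V, u |-> nu (h (0, u)) = alpha / u^2 + beta + gamma u^2 attains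
   its minimum cosh^2 rho(p, q) - 1 at u = snd y and at u = snd p, which forces q = h p unless
   alpha = gamma = 0; symmetrically h q = p.  Then h^2 fixes p, impossible for loxodromic h,
   while alpha = gamma = 0 makes h diagonal (commuting with g) or antidiagonal (of trace 0). *)

From Stdlib Require Import Reals Lra Psatz.
From Coquelicot Require Import Coquelicot.
Open Scope R_scope.

Lemma pow2_eq0 (x : R) : x ^ 2 = 0 -> x = 0.
Proof.
  intros H. destruct (Req_dec x 0) as [E | Hx]; [exact E |].
  exfalso. exact (pow_nonzero x 2 Hx H).
Qed.

Lemma pow2_le_inv (a b : R) : 0 <= b -> a ^ 2 <= b ^ 2 -> a <= b.
Proof. intros Hb H. nra. Qed.

Definition Cnorm2 (z : C) : R := fst z ^ 2 + snd z ^ 2.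

Lemma Cmod_sq (z : C) : Cmod z ^ 2 = Cnorm2 z.
Proof. unfold Cmod, Cnorm2. rewrite pow2_sqrt; [reflexivity | nra]. Qed.

Lemma Cnorm2_ge0 (z : C) : 0 <= Cnorm2 z.
Proof. unfold Cnorm2. nra. Qed.

Lemma Cnorm2_pos (z : C) : z <> 0 -> 0 < Cnorm2 z.
Proof. intros Hz. rewrite <- Cmod_sq. apply pow_lt, Cmod_gt_0, Hz. Qed.

Lemma Cnorm2_eq0 (z : C) : Cnorm2 z = 0 -> z = 0.
Proof.
  intros H. destruct (Ceq_dec z 0) as [E | Hz]; [exact E |].
  pose proof (Cnorm2_pos z Hz). lra.
Qed.

Definition M2_id : M2 := mkM2 (RtoC 1) (RtoC 0) (RtoC 0) (RtoC 1).

Definition mconj (M A : M2) : M2 := mmul (minv M) (mmul A M).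

Ltac split_M2 :=
  repeat match goal with A : M2 |- _ => destruct A as [[? ?] [? ?] [? ?] [? ?]] end.

Ltac unfold_C :=
  unfold Cminus, Cplus, Cmult, Copp, Cconj, RtoC, Cnorm2, Re, Im in *;
  cbn [fst snd ma mb mc md] in *.

Ltac eq_components :=
  repeat match goal with
  | |- mkM2 _ _ _ _ = mkM2 _ _ _ _ => f_equal
  | |- (_, _) = (_, _) => f_equal
  end.

Ltac M2_ring :=
  split_M2; unfold mconj, M2_id, mmul, minv, mopp, det, trace in *; unfold_C; eq_components; ring.

Lemma mmul_assoc (A B D : M2) : mmul A (mmul B D) = mmul (mmul A B) D.
Proof. M2_ring. Qed.

Lemma mmul_id_l (A : M2) : mmul M2_id A = A.
Proof. M2_ring. Qed.

Lemma mmul_id_r (A : M2) : mmul A M2_id = A.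
Proof. M2_ring. Qed.

Lemma minv_mmul (A B : M2) : minv (mmul A B) = mmul (minv B) (minv A).
Proof. M2_ring. Qed.

Lemma minv_minv (A : M2) : minv (minv A) = A.
Proof. M2_ring. Qed.

Lemma mopp_mmul_l (A B : M2) : mmul (mopp A) B = mopp (mmul A B).
Proof. M2_ring. Qed.

Lemma mopp_mmul_r (A B : M2) : mmul A (mopp B) = mopp (mmul A B).
Proof. M2_ring. Qed.

Lemma det_mmul (A B : M2) : det (mmul A B) = (det A * det B)%C.
Proof. M2_ring. Qed.

Lemma det_minv (A : M2) : det (minv A) = det A.
Proof. M2_ring. Qed.

Lemma SL2_mmul (A B : M2) : SL2 A -> SL2 B -> SL2 (mmul A B).
Proof. unfold SL2. intros HA HB. rewrite det_mmul, HA, HB. apply Cmult_1_l. Qed.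

Lemma SL2_minv (A : M2) : SL2 A -> SL2 (minv A).
Proof. unfold SL2. rewrite det_minv. auto. Qed.

Lemma SL2_mconj (M A : M2) : SL2 M -> SL2 A -> SL2 (mconj M A).
Proof. intros. unfold mconj. auto using SL2_mmul, SL2_minv. Qed.

Lemma mmul_minv_l (A : M2) : SL2 A -> mmul (minv A) A = M2_id.
Proof.
  unfold SL2, M2_id. intros HA.
  transitivity (mkM2 (det A) 0 0 (det A)); [M2_ring | now rewrite HA].
Qed.

Lemma mmul_minv_r (A : M2) : SL2 A -> mmul A (minv A) = M2_id.
Proof.
  unfold SL2, M2_id. intros HA.
  transitivity (mkM2 (det A) 0 0 (det A)); [M2_ring | now rewrite HA].
Qed.

Lemma mconj_mmul (M A B : M2) : SL2 M -> mconj M (mmul A B) = mmul (mconj M A) (mconj M B).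
Proof.
  intros HM. unfold mconj.
  rewrite !mmul_assoc, <- (mmul_assoc _ M), mmul_minv_r, mmul_id_r by exact HM.
  reflexivity.
Qed.

Lemma mconj_minv (M A : M2) : mconj M (minv A) = minv (mconj M A).
Proof. unfold mconj. rewrite !minv_mmul, minv_minv, mmul_assoc. reflexivity. Qed.

Lemma mconj_mopp (M A : M2) : mconj M (mopp A) = mopp (mconj M A).
Proof. unfold mconj. rewrite mopp_mmul_l, mopp_mmul_r. reflexivity. Qed.

Lemma mconj_minv_mconj (M A : M2) : SL2 M -> mconj (minv M) (mconj M A) = A.
Proof.
  intros HM. unfold mconj. rewrite minv_minv, !mmul_assoc, mmul_minv_r, mmul_id_l by exact HM.
  rewrite <- mmul_assoc, mmul_minv_r, mmul_id_r by exact HM. reflexivity.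
Qed.

Lemma pcommute_mconj (M A B : M2) : SL2 M -> pcommute A B -> pcommute (mconj M A) (mconj M B).
Proof.
  intros HM [E | E]; [left | right]; rewrite <- !mconj_mmul, E by exact HM;
    [reflexivity | apply mconj_mopp].
Qed.

Lemma trace_mconj (M A : M2) : SL2 M -> trace (mconj M A) = trace A.
Proof.
  unfold SL2. intros HM. transitivity (det M * trace A)%C; [M2_ring | rewrite HM; apply Cmult_1_l].
Qed.

Lemma loxodromic_mconj (M A : M2) : SL2 M -> loxodromic A -> loxodromic (mconj M A).
Proof. intros HM. unfold loxodromic. rewrite trace_mconj by exact HM. auto. Qed.

(** * The action on the upper half-space *)

Lemma act_den_pos (A : M2) (x : H3pt) : SL2 A -> inH3 x ->
  0 < Cmod (mc A * fst x + md A)%C ^ 2 + Cmod (mc A) ^ 2 * snd x ^ 2.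
Proof.
  unfold SL2, det, inH3. intros HA Hx.
  pose proof (pow2_ge_0 (Cmod (mc A * fst x + md A)%C)).
  destruct (Ceq_dec (mc A) 0) as [Hc | Hc].
  - assert (Hd : md A <> 0).
    { intros Hd. apply C1_nz. rewrite <- HA, Hc, Hd. ring. }
    assert (E : (mc A * fst x + md A)%C = md A) by (rewrite Hc; ring).
    rewrite E, Hc, Cmod_0.
    pose proof (pow_lt _ 2 (proj1 (Cmod_gt_0 _) Hd)). lra.
  - pose proof (Rmult_lt_0_compat _ _ (pow_lt _ 2 (proj1 (Cmod_gt_0 _) Hc)) (pow_lt _ 2 Hx)).
    lra.
Qed.

Lemma inH3_act (A : M2) (x : H3pt) : SL2 A -> inH3 x -> inH3 (act A x).
Proof. intros HA Hx. apply Rdiv_lt_0_compat; [exact Hx | exact (act_den_pos A x HA Hx)]. Qed.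

(* The point (z, t) is encoded by the Hermitian matrix
   [[hp, hw], [conj hw, hq]] = (1/t) [[|z|^2 + t^2, z], [conj z, 1]] of determinant 1;
   A acts on it by X |-> A X A^*, and cosh rho is the polar form of the determinant. *)
Record herm := Herm { hp : R; hq : R; hw : C }.

Definition herm_of (x : H3pt) : herm :=
  Herm ((Cnorm2 (fst x) + snd x ^ 2) / snd x) (/ snd x) (RtoC (/ snd x) * fst x)%C.

Definition herm_act (A : M2) (X : herm) : herm :=
  Herm (Cnorm2 (ma A) * hp X + 2 * Re (ma A * hw X * Cconj (mb A)) + Cnorm2 (mb A) * hq X)
       (Cnorm2 (mc A) * hp X + 2 * Re (mc A * hw X * Cconj (md A)) + Cnorm2 (md A) * hq X)
       (RtoC (hp X) * (ma A * Cconj (mc A)) + ma A * hw X * Cconj (md A)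
        + mb A * Cconj (hw X) * Cconj (mc A) + RtoC (hq X) * (mb A * Cconj (md A)))%C.

Definition herm_form (X Y : herm) : R :=
  (hp X * hq Y + hq X * hp Y) / 2 - (Re (hw X) * Re (hw Y) + Im (hw X) * Im (hw Y)).

Lemma herm_of_act (A : M2) (x : H3pt) : SL2 A -> inH3 x ->
  herm_of (act A x) = herm_act A (herm_of x).
Proof.
  intros HA Hx. pose proof (act_den_pos A x HA Hx) as Hden.
  destruct A as [[a1 a2] [b1 b2] [c1 c2] [d1 d2]], x as [[z1 z2] t].
  unfold SL2, det, inH3 in *. unfold act, herm_of, herm_act in *.
  cbn [hp hq hw fst snd] in *. rewrite !Cmod_sq in *. unfold_C.
  injection HA as H1 H2.
  assert (Ht0 : t <> 0) by lra.
  assert (Hden0 : (c1 * z1 - c2 * z2 + d1) ^ 2 + (c1 * z2 + c2 * z1 + d2) ^ 2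
                  + (c1 ^ 2 + c2 ^ 2) * t ^ 2 <> 0) by lra.
  f_equal; [| field; auto | f_equal; field; auto].
  set (u1 := a1 * z1 - a2 * z2 + b1). set (u2 := a1 * z2 + a2 * z1 + b2).
  set (v1 := c1 * z1 - c2 * z2 + d1). set (v2 := c1 * z2 + c2 * z1 + d2).
  set (den := v1 ^ 2 + v2 ^ 2 + (c1 ^ 2 + c2 ^ 2) * t ^ 2) in *.
  (* Lagrange's identity together with det A = 1 *)
  assert (lagrange : (u1 * v1 + u2 * v2 + (a1 * c1 + a2 * c2) * t ^ 2) ^ 2
           + (u2 * v1 - u1 * v2 + (a2 * c1 - a1 * c2) * t ^ 2) ^ 2 + t ^ 2
           = (u1 ^ 2 + u2 ^ 2 + (a1 ^ 2 + a2 ^ 2) * t ^ 2) * den).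
  { replace (t ^ 2) with (t ^ 2 * ((a1 * d1 - a2 * d2 + - (b1 * c1 - b2 * c2)) ^ 2
                         + (a1 * d2 + a2 * d1 + - (b1 * c2 + b2 * c1)) ^ 2)) at 3
      by (rewrite H1, H2; ring).
    unfold den, u1, u2, v1, v2; ring. }
  transitivity (((u1 * v1 + u2 * v2 + (a1 * c1 + a2 * c2) * t ^ 2) ^ 2
           + (u2 * v1 - u1 * v2 + (a2 * c1 - a1 * c2) * t ^ 2) ^ 2 + t ^ 2) / (den * t)).
  - unfold u1, u2, v1, v2 in *. field. auto.
  - rewrite lagrange. unfold u1, u2, v1, v2 in *. field. auto.
Qed.

Lemma herm_act_mmul (A B : M2) (X : herm) :
  herm_act (mmul A B) X = herm_act A (herm_act B X).
Proof.
  destruct X as [P Q [w1 w2]]. split_M2.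
  unfold herm_act, mmul. cbn [hp hq hw ma mb mc md]. unfold_C.
  f_equal; [ring | ring | f_equal; ring].
Qed.

Lemma herm_of_inj (x y : H3pt) : inH3 x -> inH3 y -> herm_of x = herm_of y -> x = y.
Proof.
  destruct x as [[z1 z2] t], y as [[w1 w2] s]. unfold inH3, herm_of. cbn [fst snd].
  intros Ht Hs E. injection E as _ Eq Ew1 Ew2. unfold_C.
  assert (Ets : t = s) by (rewrite <- (Rinv_inv t), <- (Rinv_inv s), Eq; reflexivity).
  subst s.
  assert (Hi : / t <> 0) by (apply Rinv_neq_0_compat; lra).
  f_equal; f_equal; apply (Rmult_eq_reg_l (/ t)); auto; lra.
Qed.

Lemma act_mmul (A B : M2) (x : H3pt) : SL2 A -> SL2 B -> inH3 x ->
  act (mmul A B) x = act A (act B x).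
Proof.
  intros HA HB Hx. apply herm_of_inj; auto using inH3_act, SL2_mmul.
  rewrite !herm_of_act; auto using inH3_act, SL2_mmul. apply herm_act_mmul.
Qed.

Lemma act_id (x : H3pt) : inH3 x -> act M2_id x = x.
Proof.
  destruct x as [[z1 z2] t]. unfold inH3, act, M2_id. cbn [fst snd ma mb mc md]. intros Ht.
  rewrite !Cmod_sq. unfold_C. eq_components; field; lra.
Qed.

Lemma act_minv_l (A : M2) (x : H3pt) : SL2 A -> inH3 x -> act (minv A) (act A x) = x.
Proof. intros HA Hx. rewrite <- act_mmul, mmul_minv_l; auto using act_id, SL2_minv. Qed.

Lemma act_minv_r (A : M2) (x : H3pt) : SL2 A -> inH3 x -> act A (act (minv A) x) = x.
Proof. intros HA Hx. rewrite <- act_mmul, mmul_minv_r; auto using act_id, SL2_minv. Qed.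

Lemma cosh_rho_herm (x y : H3pt) : inH3 x -> inH3 y ->
  cosh_rho x y = herm_form (herm_of x) (herm_of y).
Proof.
  destruct x as [[z1 z2] t], y as [[w1 w2] s]. unfold inH3, cosh_rho, herm_form, herm_of.
  cbn [fst snd hp hq hw]. rewrite Cmod_sq. unfold_C. intros Ht Hs. field. lra.
Qed.

Lemma herm_form_act (A : M2) (X Y : herm) :
  herm_form (herm_act A X) (herm_act A Y) = Cnorm2 (det A) * herm_form X Y.
Proof.
  destruct X as [P Q [w1 w2]], Y as [P' Q' [v1 v2]]. split_M2.
  unfold herm_form, herm_act, det. cbn [hp hq hw ma mb mc md]. unfold_C. field.
Qed.

Lemma cosh_rho_act (A : M2) (x y : H3pt) : SL2 A -> inH3 x -> inH3 y ->
  cosh_rho (act A x) (act A y) = cosh_rho x y.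
Proof.
  intros HA Hx Hy. rewrite !cosh_rho_herm, !herm_of_act, herm_form_act by auto using inH3_act.
  unfold SL2 in HA. rewrite HA. unfold Cnorm2, RtoC. cbn. ring.
Qed.

Lemma rho_act (A : M2) (x y : H3pt) : SL2 A -> inH3 x -> inH3 y ->
  rho (act A x) (act A y) = rho x y.
Proof. intros. unfold rho. rewrite cosh_rho_act; auto. Qed.

(** * Hyperbolic distance *)

Lemma minkowski_reverse_cauchy_schwarz (x0 x1 x2 x3 y0 y1 y2 y3 : R) :
  x0 ^ 2 = 1 + x1 ^ 2 + x2 ^ 2 + x3 ^ 2 -> y0 ^ 2 = 1 + y1 ^ 2 + y2 ^ 2 + y3 ^ 2 ->
  0 < x0 -> 0 < y0 ->
  1 <= x0 * y0 - (x1 * y1 + x2 * y2 + x3 * y3) /\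
  (x0 * y0 - (x1 * y1 + x2 * y2 + x3 * y3) <= 1 ->
   x0 = y0 /\ x1 = y1 /\ x2 = y2 /\ x3 = y3).
Proof.
  intros Hx Hy Hx0 Hy0.
  set (s := x1 * y1 + x2 * y2 + x3 * y3).
  set (a := x1 ^ 2 + x2 ^ 2 + x3 ^ 2). set (b := y1 ^ 2 + y2 ^ 2 + y3 ^ 2).
  assert (lagrange : a * b - s ^ 2 = (x1 * y2 - x2 * y1) ^ 2 + (x1 * y3 - x3 * y1) ^ 2
                                     + (x2 * y3 - x3 * y2) ^ 2) by (unfold a, b, s; ring).
  assert (dist : a + b - 2 * s = (x1 - y1) ^ 2 + (x2 - y2) ^ 2 + (x3 - y3) ^ 2)
    by (unfold a, b, s; ring).
  assert (Hdist : 0 <= a + b - 2 * s).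
  { rewrite dist. pose proof (pow2_ge_0 (x1 - y1)). pose proof (pow2_ge_0 (x2 - y2)).
    pose proof (pow2_ge_0 (x3 - y3)). lra. }
  assert (gap : (x0 * y0) ^ 2 - (1 + s) ^ 2 = (a + b - 2 * s) + (a * b - s ^ 2)).
  { replace ((x0 * y0) ^ 2) with (x0 ^ 2 * y0 ^ 2) by ring. rewrite Hx, Hy. unfold a, b. ring. }
  assert (Hlag : 0 <= a * b - s ^ 2).
  { rewrite lagrange. pose proof (pow2_ge_0 (x1 * y2 - x2 * y1)).
    pose proof (pow2_ge_0 (x1 * y3 - x3 * y1)). pose proof (pow2_ge_0 (x2 * y3 - x3 * y2)). lra. }
  assert (Hxy : 0 < x0 * y0) by (apply Rmult_lt_0_compat; lra).
  assert (Hge : 1 + s <= x0 * y0) by (destruct (Rle_or_lt (1 + s) 0); nra).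
  split; [lra |].
  intros Hle. fold s in Hle.
  assert (Eq : x0 * y0 = 1 + s) by lra.
  assert (Hdist0 : a + b - 2 * s = 0).
  { assert (Hsq : (x0 * y0) ^ 2 - (1 + s) ^ 2 = 0) by (rewrite Eq; ring). lra. }
  rewrite dist in Hdist0.
  pose proof (pow2_ge_0 (x1 - y1)). pose proof (pow2_ge_0 (x2 - y2)).
  pose proof (pow2_ge_0 (x3 - y3)).
  assert (E1 : x1 = y1) by (apply Rminus_diag_uniq, pow2_eq0; lra).
  assert (E2 : x2 = y2) by (apply Rminus_diag_uniq, pow2_eq0; lra).
  assert (E3 : x3 = y3) by (apply Rminus_diag_uniq, pow2_eq0; lra).
  subst y1 y2 y3.
  assert (E0 : x0 ^ 2 = y0 ^ 2) by lra.
  split; [nra | auto].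
Qed.

Lemma herm_form_sym (X Y : herm) : herm_form X Y = herm_form Y X.
Proof. unfold herm_form. field. Qed.

Lemma herm_form_reverse_cauchy_schwarz (X Y : herm) :
  herm_form X X = 1 -> herm_form Y Y = 1 -> 0 < hp X + hq X -> 0 < hp Y + hq Y ->
  1 <= herm_form X Y /\ (herm_form X Y <= 1 -> X = Y).
Proof.
  destruct X as [P Q [w1 w2]], Y as [P' Q' [v1 v2]].
  unfold herm_form. cbn [hp hq hw Re Im fst snd]. intros HX HY HX0 HY0.
  destruct (minkowski_reverse_cauchy_schwarz ((P + Q) / 2) w1 w2 ((P - Q) / 2)
              ((P' + Q') / 2) v1 v2 ((P' - Q') / 2)) as [Hge Heq]; try lra; try nra.
  split; [nra |].
  intros Hle. destruct Heq as [E0 [E1 [E2 E3]]]; [nra |].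
  assert (P = P') by lra. assert (Q = Q') by lra. subst. reflexivity.
Qed.

Lemma herm_of_unit (x : H3pt) : inH3 x -> herm_form (herm_of x) (herm_of x) = 1.
Proof.
  destruct x as [[z1 z2] t]. unfold inH3, herm_form, herm_of. cbn [fst snd hp hq hw].
  unfold_C. intros Ht. field. lra.
Qed.

Lemma herm_of_pos (x : H3pt) : inH3 x -> 0 < hp (herm_of x) + hq (herm_of x).
Proof.
  destruct x as [[z1 z2] t]. unfold inH3, herm_of. cbn [fst snd hp hq]. intros Ht.
  pose proof (Cnorm2_ge0 (z1, z2)).
  assert (0 < (Cnorm2 (z1, z2) + t ^ 2) / t) by (apply Rdiv_lt_0_compat; nra).
  pose proof (Rinv_0_lt_compat t Ht). lra.
Qed.

Lemma cosh_rho_ge1 (x y : H3pt) : inH3 x -> inH3 y -> 1 <= cosh_rho x y.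
Proof.
  intros Hx Hy. rewrite cosh_rho_herm by auto.
  apply herm_form_reverse_cauchy_schwarz; auto using herm_of_unit, herm_of_pos.
Qed.

Lemma cosh_rho_sym (x y : H3pt) : cosh_rho x y = cosh_rho y x.
Proof.
  destruct x as [[z1 z2] t], y as [[w1 w2] s]. unfold cosh_rho. rewrite !Cmod_sq.
  cbn [fst snd]. unfold_C. f_equal. f_equal; ring.
Qed.

Definition herm_comb (a : R) (X : herm) (b : R) (Y : herm) : herm :=
  Herm (a * hp X + b * hp Y) (a * hq X + b * hq Y) (RtoC a * hw X + RtoC b * hw Y)%C.

Lemma herm_form_comb_l (a b : R) (X Y W : herm) :
  herm_form (herm_comb a X b Y) W = a * herm_form X W + b * herm_form Y W.
Proof.
  destruct X as [P Q [w1 w2]], Y as [P1 Q1 [v1 v2]], W as [P2 Q2 [u1 u2]].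
  unfold herm_form, herm_comb. cbn [hp hq hw]. unfold_C. field.
Qed.

Lemma herm_form_comb_r (a b : R) (X Y W : herm) :
  herm_form W (herm_comb a X b Y) = a * herm_form W X + b * herm_form W Y.
Proof. rewrite herm_form_sym, herm_form_comb_l, !(herm_form_sym W). reflexivity. Qed.

Lemma herm_unit_trace_neq0 (Z : herm) : herm_form Z Z = 1 -> hp Z + hq Z <> 0.
Proof.
  destruct Z as [P Q [w1 w2]]. unfold herm_form. cbn [hp hq hw Re Im fst snd].
  intros HZ Htr. assert (Q = - P) by lra. subst Q. nra.
Qed.

(* Such a point is the reflection of x in m, which in the hyperboloid model is
   2 cosh rho(x, m) m - x. *)
Lemma cosh_rho_reflection_unique (x m y1 y2 : H3pt) :
  inH3 x -> inH3 m -> inH3 y1 -> inH3 y2 ->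
  cosh_rho m y1 <= cosh_rho x m -> cosh_rho m y2 <= cosh_rho x m ->
  2 * cosh_rho x m ^ 2 - 1 <= cosh_rho x y1 -> 2 * cosh_rho x m ^ 2 - 1 <= cosh_rho x y2 ->
  y1 = y2.
Proof.
  intros Hx Hm Hy1 Hy2 Hmy1 Hmy2 Hxy1 Hxy2.
  pose proof (cosh_rho_ge1 x m Hx Hm) as Hc.
  rewrite !cosh_rho_herm in * by auto.
  pose proof (herm_of_unit x Hx) as Ux. pose proof (herm_of_unit m Hm) as Um.
  set (X := herm_of x) in *. set (M := herm_of m) in *. set (c := herm_form X M) in *.
  assert (HMX : herm_form M X = c) by apply herm_form_sym.
  set (Z := herm_comb (2 * c) M (-1) X).
  assert (UZ : herm_form Z Z = 1).
  { unfold Z. rewrite herm_form_comb_l, !herm_form_comb_r, Ux, Um, HMX. fold c. ring. }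
  assert (HZ : 0 < hp Z + hq Z).
  { destruct (Rtotal_order 0 (hp Z + hq Z)) as [H | [H | H]]; [exact H | exfalso ..].
    - exact (herm_unit_trace_neq0 Z UZ (eq_sym H)).
    - set (mZ := herm_comb (- (2 * c)) M 1 X).
      assert (UmZ : herm_form mZ mZ = 1).
      { unfold mZ. rewrite herm_form_comb_l, !herm_form_comb_r, Ux, Um, HMX. fold c. ring. }
      assert (HmZ : 0 < hp mZ + hq mZ) by (revert H; unfold mZ, Z, herm_comb; cbn; lra).
      destruct (herm_form_reverse_cauchy_schwarz mZ M UmZ Um HmZ) as [Hge _];
        [apply herm_of_pos, Hm |].
      revert Hge. unfold mZ. rewrite herm_form_comb_l, Um. fold c. lra. }
  assert (onto_Z : forall y, inH3 y -> herm_form M (herm_of y) <= c ->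
                   2 * c ^ 2 - 1 <= herm_form X (herm_of y) -> herm_of y = Z).
  { intros y Hy HMy HXy.
    destruct (herm_form_reverse_cauchy_schwarz (herm_of y) Z) as [_ Heq];
      auto using herm_of_unit, herm_of_pos.
    apply Heq. unfold Z. rewrite herm_form_comb_r, !(herm_form_sym (herm_of y)). nra. }
  apply herm_of_inj; auto. rewrite !onto_Z; auto.
Qed.

Lemma acosh_lt (u v : R) : 1 <= u -> u < v -> acosh u < acosh v.
Proof.
  intros Hu Huv. unfold acosh.
  pose proof (sqrt_pos (u * u - 1)).
  assert (sqrt (u * u - 1) <= sqrt (v * v - 1)) by (apply sqrt_le_1_alt; nra).
  apply ln_increasing; lra.
Qed.

Lemma acosh_le (u v : R) : 1 <= u -> u <= v -> acosh u <= acosh v.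
Proof.
  intros Hu [Huv | ->]; [left; apply acosh_lt | right]; auto.
Qed.

Lemma acosh_le_inv (u v : R) : 1 <= u -> 1 <= v -> acosh u <= acosh v -> u <= v.
Proof.
  intros Hu Hv H. destruct (Rle_or_lt u v) as [Huv | Hvu]; [exact Huv |].
  pose proof (acosh_lt v u Hv Hvu). lra.
Qed.

Lemma cosh_acosh (u : R) : 1 <= u -> cosh (acosh u) = u.
Proof.
  intros Hu. unfold cosh, acosh.
  pose proof (sqrt_pos (u * u - 1)) as Hs.
  pose proof (sqrt_sqrt (u * u - 1) ltac:(nra)) as Hss.
  rewrite exp_Ropp, exp_ln by lra.
  field_simplify_eq; [nra | lra].
Qed.

Lemma cosh_double (a : R) : cosh (2 * a) = 2 * cosh a ^ 2 - 1.
Proof.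
  unfold cosh. replace (2 * a) with (a + a) by ring.
  rewrite !exp_Ropp, exp_plus. pose proof (exp_pos a). field. lra.
Qed.

Lemma acosh_double (u w : R) : 1 <= u -> 1 <= w -> acosh w = 2 * acosh u -> w = 2 * u ^ 2 - 1.
Proof.
  intros Hu Hw H. rewrite <- (cosh_acosh w Hw), <- (cosh_acosh u Hu) at 1.
  rewrite H. apply cosh_double.
Qed.

(** * The vertical geodesic and diagonal matrices *)

Definition Vpt (s : R) : H3pt := (RtoC 0, s).

(* sinh^2 of the distance to the vertical geodesic *)
Definition nu (x : H3pt) : R := Cnorm2 (fst x) / snd x ^ 2.

Definition vfoot (x : H3pt) : H3pt := Vpt (sqrt (Cnorm2 (fst x) + snd x ^ 2)).

Lemma inH3_Vpt (s : R) : 0 < s -> inH3 (Vpt s).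
Proof. auto. Qed.

Lemma Vpt_eta (y : H3pt) : fst y = 0 -> y = Vpt (snd y).
Proof. destruct y. cbn. intros ->. reflexivity. Qed.

Lemma nu_ge0 (x : H3pt) : inH3 x -> 0 <= nu x.
Proof.
  unfold inH3, nu. intros Hx. apply Rdiv_le_0_compat; [apply Cnorm2_ge0 | apply pow_lt, Hx].
Qed.

Lemma nu_Vpt (s : R) : nu (Vpt s) = 0.
Proof. unfold nu, Vpt, Cnorm2. cbn. unfold Rdiv. ring. Qed.

Lemma nu_eq0 (x : H3pt) : inH3 x -> nu x = 0 -> fst x = 0.
Proof.
  unfold inH3, nu. intros Hx H. apply Cnorm2_eq0.
  pose proof (pow_lt _ 2 Hx).
  replace (Cnorm2 (fst x)) with (Cnorm2 (fst x) / snd x ^ 2 * snd x ^ 2) by (field; lra).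
  rewrite H. ring.
Qed.

Lemma cosh_rho_sq_ge_nu (x y : H3pt) : inH3 x -> inH3 y -> fst y = 0 ->
  1 + nu x <= cosh_rho x y ^ 2.
Proof.
  intros Hx Hy Hy0. rewrite (Vpt_eta y Hy0). change (0 < snd y) in Hy.
  revert Hx Hy. generalize (snd y) as s. intros s.
  destruct x as [[z1 z2] t]. unfold inH3, nu, Vpt, cosh_rho. rewrite Cmod_sq. cbn [fst snd].
  unfold_C. intros Ht Hs.
  set (S := z1 ^ 2 + z2 ^ 2 + t ^ 2).
  assert (gap : (1 + ((z1 + - 0) ^ 2 + (z2 + - 0) ^ 2 + (t - s) ^ 2) / (2 * t * s)) ^ 2
                - (1 + (z1 ^ 2 + z2 ^ 2) / t ^ 2) = (S - s ^ 2) ^ 2 / (4 * t ^ 2 * s ^ 2)).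
  { unfold S. field. lra. }
  assert (0 <= (S - s ^ 2) ^ 2 / (4 * t ^ 2 * s ^ 2))
    by (apply Rdiv_le_0_compat; [apply pow2_ge_0 | pose proof (pow_lt _ 2 Ht);
                                                   pose proof (pow_lt _ 2 Hs); nra]).
  lra.
Qed.

Lemma inH3_vfoot (x : H3pt) : inH3 x -> inH3 (vfoot x).
Proof.
  unfold inH3. intros Hx. apply sqrt_lt_R0. pose proof (Cnorm2_ge0 (fst x)). nra.
Qed.

Lemma cosh_rho_vfoot_sq (x : H3pt) : inH3 x -> cosh_rho x (vfoot x) ^ 2 = 1 + nu x.
Proof.
  destruct x as [[z1 z2] t]. unfold inH3, vfoot, nu, Vpt, cosh_rho. rewrite Cmod_sq.
  cbn [fst snd]. intros Ht.
  assert (HS : 0 < Cnorm2 (z1, z2) + t ^ 2) by (pose proof (Cnorm2_ge0 (z1, z2)); nra).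
  pose proof (sqrt_lt_R0 _ HS) as Hs.
  pose proof (pow2_sqrt _ (Rlt_le _ _ HS)) as Hss.
  set (s := sqrt (Cnorm2 (z1, z2) + t ^ 2)) in *. clearbody s.
  unfold Cnorm2 in *. unfold_C.
  assert (E : 1 + ((z1 + - 0) ^ 2 + (z2 + - 0) ^ 2 + (t - s) ^ 2) / (2 * t * s) = s / t).
  { field_simplify_eq; [nra | lra]. }
  rewrite E. field_simplify_eq; [nra | lra].
Qed.

Lemma nu_act_Vpt (B : M2) (u : R) : SL2 B -> 0 < u ->
  nu (act B (Vpt u)) = Cnorm2 (mb B) * Cnorm2 (md B) / u ^ 2
     + 2 * Re (mb B * Cconj (md B) * (Cconj (ma B) * mc B))
     + Cnorm2 (ma B) * Cnorm2 (mc B) * u ^ 2.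
Proof.
  intros HB Hu. pose proof (act_den_pos B _ HB (inH3_Vpt u Hu)) as Hden.
  destruct B as [[a1 a2] [b1 b2] [c1 c2] [d1 d2]].
  unfold nu, act, Vpt in *. rewrite !Cmod_sq in *. cbn [fst snd ma mb mc md] in *.
  unfold_C. field. lra.
Qed.

Definition dg (l : C) : M2 := mkM2 l 0 0 (/ l)%C.

Lemma SL2_dg (l : C) : l <> 0 -> SL2 (dg l).
Proof. intros Hl. unfold SL2, det, dg. cbn. field. exact Hl. Qed.

Lemma cosh_disp_dg (l : C) (x : H3pt) : l <> 0 -> inH3 x ->
  cosh_rho x (act (dg l) x)
  = 1 + (Cnorm2 l - 1) ^ 2 / (2 * Cnorm2 l) + Cnorm2 (l * l - 1)%C / (2 * Cnorm2 l) * nu x.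
Proof.
  intros Hl. pose proof (Cnorm2_pos l Hl) as Hl2. revert Hl2.
  destruct l as [l1 l2], x as [[z1 z2] t]. unfold inH3. cbn [snd]. intros Hl2 Ht.
  unfold cosh_rho, act, dg, nu, Cinv. rewrite !Cmod_sq. cbn [fst snd ma mb mc md].
  unfold Cnorm2 in *. unfold_C. field. lra.
Qed.

Lemma disp_dg_le_iff (l : C) (x y : H3pt) : l <> 0 -> (l * l <> 1)%C -> inH3 x -> inH3 y ->
  disp (dg l) x <= disp (dg l) y <-> nu x <= nu y.
Proof.
  intros Hl Hll Hx Hy.
  assert (Hk : 0 < Cnorm2 (l * l - 1)%C / (2 * Cnorm2 l)).
  { apply Rdiv_lt_0_compat; [apply Cnorm2_pos | pose proof (Cnorm2_pos l Hl); lra].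
    intros E. apply Hll. rewrite <- (Cplus_0_l 1), <- E. ring. }
  pose proof (cosh_rho_ge1 x _ Hx (inH3_act _ x (SL2_dg l Hl) Hx)) as Hx1.
  pose proof (cosh_rho_ge1 y _ Hy (inH3_act _ y (SL2_dg l Hl) Hy)) as Hy1.
  unfold disp, rho. split.
  - intros H. apply acosh_le_inv in H; auto. rewrite !cosh_disp_dg in H by auto. nra.
  - intros H. apply acosh_le; auto. rewrite !cosh_disp_dg by auto. nra.
Qed.

Lemma disp_dg_lt (l : C) (x y : H3pt) : l <> 0 -> (l * l <> 1)%C -> inH3 x -> inH3 y ->
  nu x < nu y -> disp (dg l) x < disp (dg l) y.
Proof.
  intros Hl Hll Hx Hy H. apply Rnot_le_lt. rewrite disp_dg_le_iff by auto. lra.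
Qed.

Lemma axis_dg (l : C) (x : H3pt) : l <> 0 -> (l * l <> 1)%C ->
  axis (dg l) x <-> inH3 x /\ fst x = 0.
Proof.
  intros Hl Hll. unfold axis. split.
  - intros [Hx Hmin]. split; [exact Hx |].
    specialize (Hmin (Vpt 1) (inH3_Vpt 1 Rlt_0_1)).
    rewrite disp_dg_le_iff, nu_Vpt in Hmin by auto using inH3_Vpt, Rlt_0_1.
    apply nu_eq0; [exact Hx |]. pose proof (nu_ge0 x Hx). lra.
  - intros [Hx Hx0]. split; [exact Hx |]. intros w Hw.
    rewrite disp_dg_le_iff, (Vpt_eta x Hx0), nu_Vpt by auto. apply nu_ge0, Hw.
Qed.

(** * Loxodromic elements *)

(* Real form of: det U = 1 and the rows of U are orthonormal, hence a = conj d. *)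
Lemma SL2_unitary_diag_conj (a1 a2 b1 b2 c1 c2 d1 d2 : R) :
  a1 * d1 - a2 * d2 - (b1 * c1 - b2 * c2) = 1 ->
  a1 * d2 + a2 * d1 - (b1 * c2 + b2 * c1) = 0 ->
  c1 ^ 2 + c2 ^ 2 + d1 ^ 2 + d2 ^ 2 = 1 ->
  a1 * c1 + a2 * c2 + (b1 * d1 + b2 * d2) = 0 ->
  a2 * c1 - a1 * c2 + (b2 * d1 - b1 * d2) = 0 ->
  a1 = d1 /\ a2 = - d2.
Proof.
  intros H1 H2 H3 H4 H5. split.
  - assert (E : a1 - d1 = c1 * (a1 * c1 + a2 * c2 + (b1 * d1 + b2 * d2))
                  - c2 * (a2 * c1 - a1 * c2 + (b2 * d1 - b1 * d2))
                  + a1 * (1 - (c1 ^ 2 + c2 ^ 2 + d1 ^ 2 + d2 ^ 2))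
                  - d1 * (1 - (a1 * d1 - a2 * d2 - (b1 * c1 - b2 * c2)))
                  + d2 * (a1 * d2 + a2 * d1 - (b1 * c2 + b2 * c1))) by ring.
    rewrite H1, H2, H3, H4, H5 in E. lra.
  - assert (E : a2 + d2 = c1 * (a2 * c1 - a1 * c2 + (b2 * d1 - b1 * d2))
                  + c2 * (a1 * c1 + a2 * c2 + (b1 * d1 + b2 * d2))
                  + a2 * (1 - (c1 ^ 2 + c2 ^ 2 + d1 ^ 2 + d2 ^ 2))
                  + d1 * (a1 * d2 + a2 * d1 - (b1 * c2 + b2 * c1))
                  + d2 * (1 - (a1 * d1 - a2 * d2 - (b1 * c1 - b2 * c2)))) by ring.
    rewrite H1, H2, H3, H4, H5 in E. lra.
Qed.

(* Fixing (0, 1) means fixing the identity Hermitian matrix, i.e. being unitary. *)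
Lemma trace_fixing_Vpt1 (U : M2) : SL2 U -> act U (Vpt 1) = Vpt 1 ->
  Im (trace U) = 0 /\ Re (trace U) ^ 2 <= 4.
Proof.
  intros HU E.
  assert (HI : herm_act U (herm_of (Vpt 1)) = herm_of (Vpt 1))
    by (rewrite <- herm_of_act, E; auto using inH3_Vpt, Rlt_0_1).
  destruct U as [[a1 a2] [b1 b2] [c1 c2] [d1 d2]].
  unfold SL2, det in HU. unfold herm_act, herm_of, Vpt, trace in *.
  cbn [fst snd hp hq hw ma mb mc md] in *. unfold_C.
  injection HU as H1 H2. injection HI as HP HQ HW1 HW2.
  destruct (SL2_unitary_diag_conj a1 a2 b1 b2 c1 c2 d1 d2) as [-> ->]; try lra.
  split; [lra | nra].
Qed.

Definition affine_to (x : H3pt) : M2 :=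
  mkM2 (RtoC (sqrt (snd x))) (RtoC (/ sqrt (snd x)) * fst x)%C 0 (RtoC (/ sqrt (snd x))).

Lemma affine_to_spec (x : H3pt) : inH3 x -> SL2 (affine_to x) /\ act (affine_to x) (Vpt 1) = x.
Proof.
  destruct x as [[z1 z2] t]. unfold inH3. cbn [snd]. intros Ht.
  pose proof (sqrt_lt_R0 t Ht) as Hs.
  pose proof (sqrt_sqrt t (Rlt_le _ _ Ht)) as Hss.
  unfold SL2, det, affine_to, act, Vpt. rewrite !Cmod_sq. cbn [fst snd ma mb mc md].
  set (s := sqrt t) in *. clearbody s. subst t. unfold_C.
  split; eq_components; field; lra.
Qed.

Lemma trace_fixing (A : M2) (x : H3pt) : SL2 A -> inH3 x -> act A x = x ->
  Im (trace A) = 0 /\ Re (trace A) ^ 2 <= 4.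
Proof.
  intros HA Hx E. destruct (affine_to_spec x Hx) as [HT HTx].
  set (T := affine_to x) in *. rewrite <- (trace_mconj T A HT).
  apply trace_fixing_Vpt1; [apply SL2_mconj; auto |].
  unfold mconj. rewrite !act_mmul by auto using SL2_minv, SL2_mmul, inH3_Vpt, Rlt_0_1, inH3_act.
  rewrite HTx, E, <- HTx. apply act_minv_l; auto using inH3_Vpt, Rlt_0_1.
Qed.

Lemma trace_mmul_self (A : M2) : SL2 A -> trace (mmul A A) = (trace A * trace A - 2)%C.
Proof.
  unfold SL2. intros HA. transitivity (trace A * trace A - 2 * det A)%C; [M2_ring |].
  rewrite HA. ring.
Qed.

Lemma loxodromic_sq_no_fixed_point (A : M2) (x : H3pt) : SL2 A -> loxodromic A -> inH3 x ->
  act (mmul A A) x <> x.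
Proof.
  intros HA Hlox Hx E. apply trace_fixing in E; [| apply SL2_mmul; auto | exact Hx].
  rewrite trace_mmul_self in E by exact HA.
  apply Hlox. destruct (trace A * trace A)%C as [s1 s2]. revert E. unfold_C. cbn. nra.
Qed.

Definition Csqrt (w : C) : C :=
  let r := sqrt (fst w ^ 2 + snd w ^ 2) in
  (sqrt ((r + fst w) / 2),
   if Rle_dec 0 (snd w) then sqrt ((r - fst w) / 2) else - sqrt ((r - fst w) / 2)).

Lemma Csqrt_sq (w : C) : (Csqrt w * Csqrt w)%C = w.
Proof.
  destruct w as [w1 w2]. unfold Csqrt. cbn [fst snd].
  set (r := sqrt (w1 ^ 2 + w2 ^ 2)).
  assert (Hr : r ^ 2 = w1 ^ 2 + w2 ^ 2) by (apply pow2_sqrt; nra).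
  assert (Hr0 : 0 <= r) by apply sqrt_pos.
  assert (H1 : 0 <= (r + w1) / 2) by nra.
  assert (H2 : 0 <= (r - w1) / 2) by nra.
  pose proof (sqrt_sqrt _ H1) as S1. pose proof (sqrt_sqrt _ H2) as S2.
  assert (Prod : sqrt ((r + w1) / 2) * sqrt ((r - w1) / 2) = Rabs (w2 / 2)).
  { rewrite <- sqrt_mult by auto.
    replace ((r + w1) / 2 * ((r - w1) / 2)) with ((w2 / 2) * (w2 / 2)) by nra.
    apply sqrt_Rsqr_abs. }
  unfold Cmult. cbn [fst snd].
  destruct (Rle_dec 0 w2) as [Hw | Hw].
  - rewrite Rabs_right in Prod by lra. f_equal; nra.
  - rewrite Rabs_left in Prod by lra. f_equal; nra.
Qed.

Section Diagonalization.

Local Open Scope C_scope.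

Lemma trace_sq_of_eigenvalue_sq1 (t l : C) : l * l - t * l + 1 = 0 -> l * l = 1 -> t * t = 4.
Proof.
  intros Q E.
  assert (tl : t * l = 2) by (rewrite <- (Cplus_0_r (t * l)), <- Q, E; ring).
  transitivity ((t * l) * (t * l)); [rewrite <- (Cmult_1_r (t * t)), <- E; ring |].
  rewrite tl. ring.
Qed.

Lemma eigenvalue_exists (t : C) : t * t <> 4 -> exists l, l * l - t * l + 1 = 0 /\ l * l <> 1.
Proof.
  intros Ht.
  set (s := Csqrt (t * t - 4)).
  assert (Hs : s * s = t * t - 4) by apply Csqrt_sq.
  assert (H2 : RtoC 2 <> 0) by (intro E; injection E; lra).
  exists ((t + s) / 2). split.
  - field_simplify_eq; auto. replace (s ^ 2) with (s * s) by ring. rewrite Hs. ring.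
  - intros E. apply Ht. apply (trace_sq_of_eigenvalue_sq1 t ((t + s) / 2)); [| exact E].
    field_simplify_eq; auto. replace (s ^ 2) with (s * s) by ring. rewrite Hs. ring.
Qed.

Lemma loxodromic_trace_sq_neq4 (A : M2) : loxodromic A -> trace A * trace A <> 4.
Proof.
  intros Hl E. apply Hl. rewrite E. unfold Im, Re, RtoC. cbn. lra.
Qed.

Lemma diagonalize (g : M2) : SL2 g -> loxodromic g ->
  exists M (l : C), SL2 M /\ l <> 0 /\ l * l <> 1 /\ mconj M g = dg l.
Proof.
  intros Hg Hlox. pose proof (loxodromic_trace_sq_neq4 g Hlox) as Ht.
  destruct g as [a b c d]. unfold SL2, det, trace in *. cbn [ma mb mc md] in *.
  destruct (eigenvalue_exists (a + d) Ht) as [l [Q Hll]].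
  assert (Hl0 : l <> 0) by (intro E; apply C1_nz; rewrite <- Q, E; ring).
  assert (Hll1 : l * l - 1 <> 0).
  { intro E. apply Hll. rewrite <- (Cplus_0_l 1), <- E. ring. }
  assert (Hs : l - / l <> 0).
  { intro E. apply Hll1. transitivity (l * (l - / l)); [field; auto | rewrite E; ring]. }
  destruct (Ceq_dec c 0) as [-> | Hc].
  - assert (Had : a * d = 1) by (rewrite <- Hg; ring).
    assert (Ha0 : a <> 0) by (intro E; apply C1_nz; rewrite <- Had, E; ring).
    assert (Ed : d = / a) by (field_simplify_eq; auto; rewrite <- Had; ring).
    assert (Haa : a * a <> 1).
    { intro E. apply Ht. apply (trace_sq_of_eigenvalue_sq1 _ a); [rewrite Ed; field |]; auto. }
    destruct (Ceq_dec b 0) as [-> | Hb].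
    + exists M2_id, a. repeat split; auto.
      * unfold SL2, det, M2_id. cbn. ring.
      * unfold mconj, mmul, minv, M2_id, dg. cbn [ma mb mc md]. rewrite <- Ed. f_equal; ring.
    + assert (Hda : d - a <> 0).
      { intro E. apply Haa. rewrite <- Had. replace d with (a + (d - a)) by ring.
        rewrite E. ring. }
      exists (mkM2 1 (b / (d - a)) 0 1), a. repeat split; auto.
      * unfold SL2, det. cbn. ring.
      * unfold mconj, mmul, minv, dg. cbn [ma mb mc md]. rewrite <- Ed. f_equal; field; auto.
  - assert (E1 : (a + d) * l = l * l + 1).
    { transitivity (l * l + 1 - (l * l - (a + d) * l + 1)); [ring | rewrite Q; ring]. }
    assert (Ed : d = l + / l - a).
    { transitivity ((a + d) * l * / l - a); [field; auto | rewrite E1; field; auto]. }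
    assert (Eb : b = (a * d - 1) / c) by (field_simplify_eq; auto; rewrite <- Hg; ring).
    subst b d. set (s := l - / l) in *.
    (* columns: eigenvectors (l - d, c) and (1/l - d, c) of g, scaled to det M = 1 *)
    exists (mkM2 ((l - (l + / l - a)) / (c * s)) (/ l - (l + / l - a)) (/ s) c), l.
    repeat split; auto.
    + unfold SL2, det. cbn [ma mb mc md]. unfold s in *. field. auto.
    + unfold mconj, mmul, minv, dg. cbn [ma mb mc md]. unfold s in *. f_equal; field; auto.
Qed.

End Diagonalization.

#[local] Hint Resolve SL2_mmul SL2_minv SL2_mconj SL2_dg inH3_act inH3_Vpt inH3_vfoot : core.

Lemma axis_inH3 (A : M2) (x : H3pt) : axis A x -> inH3 x.
Proof. apply proj1. Qed.

Lemma act_mconj (M A : M2) (y : H3pt) : SL2 M -> SL2 A -> inH3 y ->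
  act (mconj M A) (act (minv M) y) = act (minv M) (act A y).
Proof.
  intros HM HA Hy. unfold mconj. rewrite !act_mmul, act_minv_r by auto. reflexivity.
Qed.

Lemma disp_mconj (M A : M2) (x : H3pt) : SL2 M -> SL2 A -> inH3 x ->
  disp (mconj M A) (act (minv M) x) = disp A x.
Proof. intros HM HA Hx. unfold disp. rewrite act_mconj, rho_act by auto. reflexivity. Qed.

Lemma disp_mconj_minv (M A : M2) (x : H3pt) : SL2 M -> SL2 A -> inH3 x ->
  disp (mconj (minv M) A) x = disp A (act (minv M) x).
Proof.
  intros HM HA Hx. rewrite <- (disp_mconj (minv M) A), minv_minv, act_minv_r by auto.
  reflexivity.
Qed.

Lemma axis_mconj (M A : M2) (x : H3pt) : SL2 M -> SL2 A -> inH3 x ->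
  axis (mconj M A) (act (minv M) x) <-> axis A x.
Proof.
  intros HM HA Hx. unfold axis. rewrite disp_mconj by auto. split.
  - intros [_ Hmin]. split; [exact Hx |]. intros w Hw.
    rewrite <- (disp_mconj M A w) by auto. apply Hmin. auto.
  - intros [_ Hmin]. split; [auto |]. intros w Hw.
    rewrite <- (act_minv_l M w), disp_mconj by auto. apply Hmin. auto.
Qed.

Lemma mconj_mconj (M N A : M2) : SL2 M -> mconj M (mconj N A) = mconj (mconj M N) (mconj M A).
Proof.
  intros HM. unfold mconj at 2 3. rewrite !mconj_mmul, mconj_minv by exact HM. reflexivity.
Qed.

Definition shortest_between_axes (A B : M2) (p q : H3pt) : Prop :=
  axis A p /\ axis B q /\ forall p' q', axis A p' -> axis B q' -> rho p q <= rho p' q'.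

Definition is_midpoint (p q z : H3pt) : Prop :=
  inH3 z /\ rho p z = rho p q / 2 /\ rho z q = rho p q / 2.

Lemma shortest_between_axes_mconj (M A B : M2) (p q : H3pt) : SL2 M -> SL2 A -> SL2 B ->
  shortest_between_axes A B p q ->
  shortest_between_axes (mconj M A) (mconj M B) (act (minv M) p) (act (minv M) q).
Proof.
  intros HM HA HB [Hp [Hq Hmin]].
  pose proof (axis_inH3 _ _ Hp). pose proof (axis_inH3 _ _ Hq).
  split; [apply axis_mconj; auto | split; [apply axis_mconj; auto |]].
  intros p' q' Hp' Hq'.
  pose proof (axis_inH3 _ _ Hp'). pose proof (axis_inH3 _ _ Hq').
  rewrite rho_act, <- (rho_act M p' q') by auto.
  apply Hmin; [apply (axis_mconj M) | apply (axis_mconj M)]; rewrite ?act_minv_l; auto.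
Qed.

Lemma is_midpoint_act (T : M2) (p q z : H3pt) : SL2 T -> inH3 p -> inH3 q ->
  is_midpoint p q z -> is_midpoint (act T p) (act T q) (act T z).
Proof.
  intros HT Hp Hq [Hz Hmid]. split; [auto |]. rewrite !rho_act by auto. exact Hmid.
Qed.

(** * The diagonal case *)

Lemma inv_sq_plus_sq_minimizer_unique (al ga u1 u2 : R) :
  0 <= al -> 0 <= ga -> 0 < u1 -> 0 < u2 ->
  (forall u, 0 < u -> al / u1 ^ 2 + ga * u1 ^ 2 <= al / u ^ 2 + ga * u ^ 2) ->
  (forall u, 0 < u -> al / u2 ^ 2 + ga * u2 ^ 2 <= al / u ^ 2 + ga * u ^ 2) ->
  u1 = u2 \/ (al = 0 /\ ga = 0).
Proof.
  intros Hal Hga Hu1 Hu2 H1 H2.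
  destruct (Req_dec al 0) as [-> | Hal0].
  - right. split; [reflexivity |].
    specialize (H1 (u1 / 2) ltac:(lra)).
    assert (Hsq : 0 < u1 ^ 2) by (apply pow_lt; lra).
    replace (0 / u1 ^ 2 + ga * u1 ^ 2) with (ga * u1 ^ 2) in H1 by (field; lra).
    replace (0 / (u1 / 2) ^ 2 + ga * (u1 / 2) ^ 2) with (ga * u1 ^ 2 / 4) in H1 by (field; lra).
    nra.
  - left.
    (* U |-> al / U + ga U is strictly convex, so at the mean of U1 = u1^2 and U2 = u2^2
       it lies strictly below the mean of its values unless U1 = U2 *)
    set (U1 := u1 ^ 2) in *. set (U2 := u2 ^ 2) in *. set (m := (U1 + U2) / 2).
    assert (HU1 : 0 < U1) by (apply pow_lt; lra). assert (HU2 : 0 < U2) by (apply pow_lt; lra).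
    assert (Hm : 0 < m) by (unfold m; lra).
    pose proof (H1 (sqrt m) (sqrt_lt_R0 m Hm)) as A1.
    pose proof (H2 (sqrt m) (sqrt_lt_R0 m Hm)) as A2.
    rewrite pow2_sqrt in A1, A2 by lra.
    assert (convex : al / U1 + al / U2 - 2 * (al / m) = al * (U1 - U2) ^ 2 / (U1 * U2 * (U1 + U2))).
    { unfold m. field. repeat split; lra. }
    assert (Hgam : ga * m * 2 = ga * U1 + ga * U2) by (unfold m; field).
    assert (Hdiff : (U1 - U2) ^ 2 = 0).
    { apply Rle_antisym; [| apply pow2_ge_0].
      assert (Hden : 0 < U1 * U2 * (U1 + U2))
        by (apply Rmult_lt_0_compat; [apply Rmult_lt_0_compat |]; lra).
      assert (Hpos : 0 < al / (U1 * U2 * (U1 + U2))) by (apply Rdiv_lt_0_compat; lra).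
      assert (Hfrac : al / (U1 * U2 * (U1 + U2)) * (U1 - U2) ^ 2 <= 0).
      { replace (al / (U1 * U2 * (U1 + U2)) * (U1 - U2) ^ 2)
          with (al * (U1 - U2) ^ 2 / (U1 * U2 * (U1 + U2))) by (field; lra).
        lra. }
      nra. }
    apply pow2_eq0 in Hdiff.
    assert (U1 = U2) by lra. unfold U1, U2 in *. nra.
Qed.

Definition diag_or_antidiag (A : M2) : Prop :=
  (mb A = 0 /\ mc A = 0) \/ (ma A = 0 /\ md A = 0).

Lemma diag_or_antidiag_of_products (A : M2) : SL2 A ->
  Cnorm2 (mb A) * Cnorm2 (md A) = 0 -> Cnorm2 (ma A) * Cnorm2 (mc A) = 0 -> diag_or_antidiag A.
Proof.
  unfold SL2, det, diag_or_antidiag. intros HA Hbd Hac.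
  destruct (Rmult_integral _ _ Hbd) as [Hb%Cnorm2_eq0 | Hd%Cnorm2_eq0],
    (Rmult_integral _ _ Hac) as [Ha%Cnorm2_eq0 | Hc%Cnorm2_eq0]; auto.
  all: exfalso; apply C1_nz; rewrite <- HA.
  - rewrite Ha, Hb. ring.
  - rewrite Hc, Hd. ring.
Qed.

Lemma diag_or_antidiag_minv (A : M2) : diag_or_antidiag (minv A) -> diag_or_antidiag A.
Proof.
  assert (Copp_eq0 : forall z : C, (- z)%C = 0 -> z = 0).
  { intros z Hz. transitivity (- (- z))%C; [ring | rewrite Hz; ring]. }
  unfold diag_or_antidiag, minv. cbn [ma mb mc md].
  intros [[Hb Hc] | [Hd Ha]]; [left | right]; auto.
Qed.

Lemma not_diag_or_antidiag (l : C) (A : M2) : loxodromic A -> ~ pcommute (dg l) A ->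
  ~ diag_or_antidiag A.
Proof.
  intros Hlox Hnc [[Hb Hc] | [Ha Hd]].
  - apply Hnc. left. destruct A as [a b c d]. cbn in Hb, Hc. subst b c.
    unfold mmul, dg. cbn [ma mb mc md]. f_equal; ring.
  - apply Hlox. unfold trace. rewrite Ha, Hd. cbn. lra.
Qed.

Lemma Vpt_image_closest_unique (B : M2) (d u1 u2 : R) : SL2 B -> 0 < u1 -> 0 < u2 ->
  (forall u, 0 < u -> d <= nu (act B (Vpt u))) ->
  nu (act B (Vpt u1)) <= d -> nu (act B (Vpt u2)) <= d ->
  u1 = u2 \/ diag_or_antidiag B.
Proof.
  intros HB Hu1 Hu2 Hmin H1 H2.
  destruct (inv_sq_plus_sq_minimizer_unique (Cnorm2 (mb B) * Cnorm2 (md B))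
              (Cnorm2 (ma B) * Cnorm2 (mc B)) u1 u2) as [E | [Hbd Hac]];
    auto using Rmult_le_pos, Cnorm2_ge0.
  - intros u Hu. specialize (Hmin u Hu). rewrite !nu_act_Vpt in * by auto. lra.
  - intros u Hu. specialize (Hmin u Hu). rewrite !nu_act_Vpt in * by auto. lra.
  - right. apply diag_or_antidiag_of_products; auto.
Qed.

Section Diagonal_case.

Variables (l : C) (h : M2) (p q z0 : H3pt).
Hypotheses (Hl : l <> 0) (Hll : (l * l <> 1)%C) (Hh : SL2 h).
Hypothesis Hpq : shortest_between_axes (dg l) (mconj h (dg l)) p q.

Lemma axis_dg_vertical (x : H3pt) : inH3 x -> fst x = 0 -> axis (dg l) x.
Proof. intros. apply axis_dg; auto. Qed.

Lemma axis_conj_dg (y : H3pt) : axis (mconj h (dg l)) y <-> inH3 y /\ fst (act h y) = 0.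
Proof.
  split.
  - intros Hy. pose proof (axis_inH3 _ _ Hy) as Hy3.
    rewrite <- (act_minv_l h y), axis_mconj, axis_dg in Hy by auto. tauto.
  - intros [Hy3 Hy0]. rewrite <- (act_minv_l h y), axis_mconj by auto.
    apply axis_dg_vertical; auto.
Qed.

Let Hp : axis (dg l) p := proj1 Hpq.
Let Hq : axis (mconj h (dg l)) q := proj1 (proj2 Hpq).

Lemma cosh_rho_pq_le (p' q' : H3pt) : axis (dg l) p' -> axis (mconj h (dg l)) q' ->
  cosh_rho p q <= cosh_rho p' q'.
Proof.
  intros Hp' Hq'.
  apply acosh_le_inv; [apply cosh_rho_ge1; eapply axis_inH3; eauto .. |].
  apply (proj2 (proj2 Hpq)); assumption.
Qed.

Lemma cosh_rho_pq_sq_le_nu_conj (y : H3pt) : axis (mconj h (dg l)) y ->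
  cosh_rho p q ^ 2 <= 1 + nu y.
Proof.
  intros Hy. pose proof (axis_inH3 _ _ Hy) as Hy3.
  rewrite <- cosh_rho_vfoot_sq, (cosh_rho_sym y) by exact Hy3.
  pose proof (cosh_rho_ge1 p q (axis_inH3 _ _ Hp) (axis_inH3 _ _ Hq)).
  apply pow_incr. split; [lra |]. apply cosh_rho_pq_le; [apply axis_dg_vertical |]; auto.
Qed.

Lemma cosh_rho_pq_sq_le_nu_act (x : H3pt) : axis (dg l) x -> cosh_rho p q ^ 2 <= 1 + nu (act h x).
Proof.
  intros Hx. pose proof (axis_inH3 _ _ Hx) as Hx3.
  rewrite <- cosh_rho_vfoot_sq by auto.
  pose proof (cosh_rho_ge1 p q (axis_inH3 _ _ Hp) (axis_inH3 _ _ Hq)).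
  apply pow_incr. split; [lra |].
  rewrite <- (act_minv_r h (vfoot (act h x))), (cosh_rho_act h) by auto.
  apply cosh_rho_pq_le; [exact Hx |]. apply axis_conj_dg. rewrite act_minv_r by auto.
  split; auto.
Qed.

Let Hp_vertical : inH3 p /\ fst p = 0 := proj1 (axis_dg l p Hl Hll) Hp.
Let Hq_conj : inH3 q /\ fst (act h q) = 0 := proj1 (axis_conj_dg q) Hq.

Lemma cosh_rho_pq_sq_ge_nu_q : 1 + nu q <= cosh_rho p q ^ 2.
Proof.
  destruct Hp_vertical, Hq_conj. rewrite cosh_rho_sym. apply cosh_rho_sq_ge_nu; auto.
Qed.

Hypothesis Hmid : is_midpoint p q z0.

Lemma midpoint_cosh_rho :
  cosh_rho z0 q = cosh_rho p z0 /\ cosh_rho p q = 2 * cosh_rho p z0 ^ 2 - 1.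
Proof.
  destruct Hmid as [Hz [Hpz Hzq]], Hp_vertical as [Hp3 _], Hq_conj as [Hq3 _].
  pose proof (cosh_rho_ge1 p z0 Hp3 Hz). pose proof (cosh_rho_ge1 z0 q Hz Hq3).
  pose proof (cosh_rho_ge1 p q Hp3 Hq3).
  unfold rho in Hpz, Hzq. split.
  - apply Rle_antisym; apply acosh_le_inv; auto; lra.
  - apply acosh_double; auto. lra.
Qed.

Lemma q_eq_act_vfoot : nu (act (minv h) z0) <= nu z0 -> q = act h (vfoot (act (minv h) z0)).
Proof.
  intros Hnu.
  destruct midpoint_cosh_rho as [Czq Cpq], Hp_vertical as [Hp3 Hp0], Hq_conj as [Hq3 _].
  pose proof (proj1 Hmid) as Hz.
  set (w := act (minv h) z0) in *. assert (Hw : inH3 w) by (unfold w; auto).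
  set (c := act h (vfoot w)). assert (Hc : inH3 c) by (unfold c; auto).
  assert (Hzc : cosh_rho z0 c <= cosh_rho p z0).
  { pose proof (cosh_rho_ge1 p z0 Hp3 Hz).
    replace z0 with (act h w) at 1 by (apply act_minv_r; auto).
    unfold c. rewrite cosh_rho_act by auto.
    apply pow2_le_inv; [lra |]. rewrite cosh_rho_vfoot_sq, (cosh_rho_sym p) by exact Hw.
    pose proof (cosh_rho_sq_ge_nu z0 p Hz Hp3 Hp0). lra. }
  assert (Hpc : cosh_rho p q <= cosh_rho p c).
  { rewrite <- (cosh_rho_act (minv h) p c) by (unfold c; auto).
    unfold c. rewrite act_minv_l, (cosh_rho_sym (act (minv h) p)) by auto.
    apply cosh_rho_pq_le; [apply axis_dg_vertical; auto |].
    apply axis_conj_dg. rewrite act_minv_r by auto. split; auto. }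
  symmetry. apply (cosh_rho_reflection_unique p z0 c q); auto; lra.
Qed.

Lemma q_eq_act_p (y : H3pt) : inH3 y -> fst y = 0 -> q = act h y ->
  q = act h p \/ diag_or_antidiag h.
Proof.
  intros Hy Hy0 Eq. destruct Hp_vertical as [Hp3 Hp0], Hq_conj as [Hq3 Hhq0].
  set (D := cosh_rho p q).
  assert (Hmin : forall u, 0 < u -> D ^ 2 - 1 <= nu (act h (Vpt u))).
  { intros u Hu.
    assert (Hax : axis (dg l) (Vpt u)) by (apply axis_dg_vertical; auto).
    pose proof (cosh_rho_pq_sq_le_nu_act _ Hax). unfold D. lra. }
  assert (Hy_min : nu (act h (Vpt (snd y))) <= D ^ 2 - 1).
  { rewrite <- (Vpt_eta y Hy0), <- Eq. pose proof cosh_rho_pq_sq_ge_nu_q. unfold D. lra. }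
  assert (Hp_min : nu (act h (Vpt (snd p))) <= D ^ 2 - 1).
  { rewrite <- (Vpt_eta p Hp0).
    pose proof (cosh_rho_sq_ge_nu (act h p) (act h q) ltac:(auto) ltac:(auto) Hhq0) as H.
    rewrite cosh_rho_act in H by auto. unfold D. lra. }
  destruct (Vpt_image_closest_unique h (D ^ 2 - 1) (snd y) (snd p)) as [E | Hdeg]; auto.
  left. rewrite Eq, (Vpt_eta y Hy0), (Vpt_eta p Hp0), E. reflexivity.
Qed.

Lemma act_q_eq_p (y : H3pt) : inH3 y -> fst y = 0 -> q = act h y ->
  act h q = p \/ diag_or_antidiag h.
Proof.
  intros Hy Hy0 Eq. destruct Hp_vertical as [Hp3 Hp0], Hq_conj as [Hq3 Hhq0].
  assert (Ey : act (minv h) q = y) by (rewrite Eq; apply act_minv_l; auto).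
  set (D := cosh_rho p q).
  assert (Hmin : forall u, 0 < u -> D ^ 2 - 1 <= nu (act (minv h) (Vpt u))).
  { intros u Hu.
    assert (Hax : axis (mconj h (dg l)) (act (minv h) (Vpt u)))
      by (apply axis_conj_dg; rewrite act_minv_r by auto; split; auto).
    pose proof (cosh_rho_pq_sq_le_nu_conj _ Hax). unfold D. lra. }
  assert (Hhq_min : nu (act (minv h) (Vpt (snd (act h q)))) <= D ^ 2 - 1).
  { rewrite <- (Vpt_eta _ Hhq0), act_minv_l by auto.
    pose proof cosh_rho_pq_sq_ge_nu_q. unfold D. lra. }
  assert (Hp_min : nu (act (minv h) (Vpt (snd p))) <= D ^ 2 - 1).
  { rewrite <- (Vpt_eta p Hp0).
    pose proof (cosh_rho_sq_ge_nu (act (minv h) p) y ltac:(auto) Hy Hy0) as H.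
    rewrite <- Ey, cosh_rho_act in H by auto. unfold D. lra. }
  assert (Hhq3 : inH3 (act h q)) by auto.
  destruct (Vpt_image_closest_unique (minv h) (D ^ 2 - 1) (snd (act h q)) (snd p))
    as [E | Hdeg]; auto.
  - left. rewrite (Vpt_eta _ Hhq0), (Vpt_eta p Hp0), E. reflexivity.
  - right. apply diag_or_antidiag_minv, Hdeg.
Qed.

Hypotheses (lox_h : loxodromic h) (nc : ~ pcommute (dg l) h).

Theorem disp_midpoint_lt_dg : disp (dg l) z0 < disp (mconj (minv h) (dg l)) z0.
Proof.
  pose proof (proj1 Hmid) as Hz. destruct Hp_vertical as [Hp3 _].
  rewrite disp_mconj_minv by auto.
  destruct (Rlt_or_le (nu z0) (nu (act (minv h) z0))) as [Hlt | Hle];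
    [apply disp_dg_lt; auto |].
  exfalso.
  pose proof (q_eq_act_vfoot Hle) as Eq.
  set (y := vfoot (act (minv h) z0)) in Eq.
  assert (Hy : inH3 y) by (unfold y; auto).
  destruct (q_eq_act_p y Hy eq_refl Eq) as [E1 | Hdeg];
    [| exact (not_diag_or_antidiag l h lox_h nc Hdeg)].
  destruct (act_q_eq_p y Hy eq_refl Eq) as [E2 | Hdeg];
    [| exact (not_diag_or_antidiag l h lox_h nc Hdeg)].
  apply (loxodromic_sq_no_fixed_point h p Hh lox_h Hp3).
  rewrite act_mmul, <- E1, E2 by auto. reflexivity.
Qed.

End Diagonal_case.

Theorem lemma6p2 (g h : M2) (Hg : SL2 g) (Hh : SL2 h)
  (lox_g : loxodromic g) (lox_h : loxodromic h) (nc : ~ pcommute g h)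
  (p q z0 : H3pt)
  (Hp : axis g p) (Hq : axis (mmul (minv h) (mmul g h)) q)
  (Hshortest : forall p' q', axis g p' -> axis (mmul (minv h) (mmul g h)) q' ->
                 rho p q <= rho p' q')
  (Hz0 : inH3 z0)
  (Hmid : rho p z0 = rho p q / 2 /\ rho z0 q = rho p q / 2) :
  disp g z0 < disp (mmul h (mmul g (minv h))) z0.
Proof.
  destruct (diagonalize g Hg lox_g) as [M [l [HM [Hl [Hll Eg]]]]].
  change (mmul (minv h) (mmul g h)) with (mconj h g) in *.
  replace (mmul h (mmul g (minv h))) with (mconj (minv h) g)
    by (unfold mconj; rewrite minv_minv; reflexivity).
  rewrite <- (disp_mconj M g z0), <- (disp_mconj M (mconj (minv h) g) z0) by auto.
  rewrite mconj_mconj, mconj_minv, Eg by exact HM.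
  apply (disp_midpoint_lt_dg l (mconj M h) (act (minv M) p) (act (minv M) q)); auto.
  - rewrite <- Eg, <- mconj_mconj by exact HM.
    apply shortest_between_axes_mconj; auto. exact (conj Hp (conj Hq Hshortest)).
  - apply is_midpoint_act; eauto using axis_inH3. exact (conj Hz0 Hmid).
  - apply loxodromic_mconj; auto.
  - intros Hc. apply nc.
    rewrite <- (mconj_minv_mconj M g), <- (mconj_minv_mconj M h), Eg by exact HM.
    apply pcommute_mconj; auto.
Qed.
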